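(* Consider the protocol $\Pi_{(t+1,n)}$ described in the context, with $1\le t$ and $n>2t$, run on an automaton $\mathcal{A}=(ST,\Sigma,\mu)$ with states $s_1,\dots,s_m$ from initial state $s_{\mathrm{init}}$. Then for every $r\ge 0$, after the $r$-th clock tick has been processed, and for every $j\in\{1,\dots,m\}$, there is a polynomial $Q_j$ over $\mathbb{F}$ of degree at most $t$ such that $\ell^i_j=Q_j(i)$ for all $i=1,\dots,n$, and $Q_j(0)=1$ if $s_j$ is the state reached by $\mathcal{A}$ from $s_{\mathrm{init}}$ on the input symbols received during ticks $1,\dots,r$, while $Q_j(0)=0$ otherwise. Consequently, the labels of any $t+1$ agents determine (by Lagrange interpolation at $0$) all the values $Q_j(0)$, and hence the current state of $\mathcal{A}$.
   Context: A finite-state automaton $\mathcal{A}$ has finite state set $ST=\{s_1,\dots,s_m\}$, finite alphabet $\Sigma$ and transition function $\mu:ST\times\Sigma\to ST$. Time proceeds in global clock ticks $r=1,2,\dots$; at each tick at most one input symbol arrives (simultaneously to all agents), possibly none. Protocol $\Pi_{(t+1,n)}$. Let $\mathbb{F}$ be a finite field with $|\mathbb{F}|>n$, and identify agent indices $1,\dots,n$ with distinct nonzero elements of $\mathbb{F}$. Let $G:\{0,1\}^{len}\to\mathbb{F}^m\times\{0,1\}^{len}$, writing $G(x)=(b_1,\dots,b_m)\|S$. Let $\mathcal{T}$ be the family of all subsets of $\{A_1,\dots,A_n\}$ of size $n-t+1$. Initialization: for each $j$ the dealer picks a uniformly random polynomial $f_j$ over $\mathbb{F}$ of degree at most $t$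 with $f_j(0)=1$ if $j=\mathrm{init}$ and $f_j(0)=0$ otherwise (Shamir sharing), and agent $A_i$ sets $\ell^i_j:=f_j(i)$. For each $T\in\mathcal{T}$ the dealer picks a uniform seed $\mathrm{seed}^T\in\{0,1\}^{len}$ and gives it to every agent in $T$. Event processing (at every tick): each agent $A_i$ (1) if a symbol $\gamma$ arrived, replaces simultaneously for all $j$: $\ell^i_j:=\sum_{k:\,\mu(s_k,\gamma)=s_j}\ell^i_k$ (sum in $\mathbb{F}$; empty sum $=0$); (2) for each $T\in\mathcal{T}$ with $A_i\in T$, computes $G(\mathrm{seed}^T)=(b^T_1,\dots,b^T_m)\|S^T$ and replaces $\mathrm{seed}^T$ by $S^T$ (erasing the old seed); (3) for each $j$ sets $\ell^i_j:=\ell^i_j+\sum_{T\in\mathcal{T},\,A_i\in T}P^T_j(i)$, where $P^T_j$ is the unique polynomial of degree at most $t$ with $P^T_j(0)=0$, $P^T_j(a)=0$ for every index $a$ with $A_a\notin T$ (there are $t-1$ such), and $P^T_j(k_T)=b^T_j$ where $k_T$ is the minimal index of an agent in $T$. Reconstruction: at least $t+1$ agents submit their labels; for each $j$ the dealer interpolates the degree-$\le t$ polynomial through their points $(i,\ell^i_j)$, evaluates it at $0$, and outputs the state whose value is $1$. *)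

From HB Require Import structures.
From mathcomp Require Import all_boot all_order all_algebra.
Set Implicit Arguments. Unset Strict Implicit. Unset Printing Implicit Defensive.
Import GRing.Theory.
Local Open Scope ring_scope.

Definition seed (len : nat) := (len.-tuple bool)%type.

Section Protocol.
Variables (F : fieldType) (n m t len : nat) (Sigma : Type).
Variable mu : 'I_m -> Sigma -> 'I_m.
Variable idx : 'I_n -> F.
Variable G : seed len -> {ffun 'I_m -> F} * seed len.
(* P T b = the polynomial P^T_j when b = b^T_j *)
Variable P : {set 'I_n} -> F -> {poly F}.

Definition inFam (T : {set 'I_n}) : bool := #|T| == (n - t + 1)%N.

(* Local configuration of all agents: labels l^i_j and the seeds seed^T held by agent i *)
Record config := Config {
  lab : 'I_n -> 'I_m -> F;
  sd  : 'I_n -> {set 'I_n} -> seed len }.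

Definition update_labels (c : config) (g : option Sigma) : 'I_n -> 'I_m -> F :=
  fun i j => match g with
             | None => lab c i j
             | Some gam => \sum_(k : 'I_m | mu k gam == j) lab c i k
             end.

Definition step (c : config) (g : option Sigma) : config :=
  Config
    (fun i j => update_labels c g i j +
        \sum_(T : {set 'I_n} | inFam T && (i \in T)) (P T ((G (sd c i T)).1 j)).[idx i])
    (fun i T => if inFam T && (i \in T) then (G (sd c i T)).2 else sd c i T).

(* Run of the protocol: inp r is the symbol (if any) arriving at tick r >= 1 *)
Fixpoint run (c0 : config) (inp : nat -> option Sigma) (r : nat) : config :=
  match r with
  | 0 => c0
  | r'.+1 => step (run c0 inp r') (inp r)
  end.

Fixpoint astate (s0 : 'I_m) (inp : nat -> option Sigma) (r : nat) : 'I_m :=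
  match r with
  | 0 => s0
  | r'.+1 => match inp r with
             | None => astate s0 inp r'
             | Some gam => mu (astate s0 inp r') gam
             end
  end.

Definition init_config (f : 'I_m -> {poly F}) (seed0 : {set 'I_n} -> seed len) : config :=
  Config (fun i j => (f j).[idx i]) (fun i T => seed0 T).

Definition interp0 (S : {set 'I_n}) (y : 'I_n -> F) : F :=
  \sum_(i in S) y i * \prod_(k in S | k != i) ((0 - idx k) / (idx i - idx k)).

End Protocol.

From HB Require Import structures.
From mathcomp Require Import all_boot all_order all_algebra zify.
Set Implicit Arguments. Unset Strict Implicit. Unset Printing Implicit Defensive.
Import GRing.Theory.
Local Open Scope ring_scope.

(* The proof is an induction over the clock ticks carrying three facts about
   the configuration after r ticks:
   - all agents of a set T in the family hold the same seed for T
     ([seeds_common]);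
   - for every state j there is a polynomial Q_j whose value at idx i is the
     label l^i_j ([shared_by]);
   - each Q_j has degree at most t and Q_j(0) is 1 exactly at the current
     state ([sharing_of]).
   One tick maps Q to [next_polys]: step (1) is linear, so the labels become
   the values of the sums of the Q_k with mu k gam = j, whose constants add up
   to the indicator of the new state; step (3) adds the same refresh
   polynomial \sum_T P^T_j on every agent (the seeds are common), which has
   degree at most t and vanishes at 0; P^T_j also vanishes at the agents
   outside T, so agents that do not hold seed^T lose nothing.  Reconstruction
   then follows from Lagrange interpolation at 0 through any t+1 shares
   ([interp0_samples]). *)

Lemma size_sum_le (R : nzSemiRingType) (I : Type) (r : seq I) (p : pred I)
    (q : I -> {poly R}) (N : nat) :
  (forall i, p i -> (size (q i) <= N)%N) -> (size (\sum_(i <- r | p i) q i)%R <= N)%N.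
Proof.
move=> hq; elim/big_ind: _ => // [|q1 q2 h1 h2]; first by rewrite size_poly0.
by apply: leq_trans (size_polyD _ _) _; rewrite geq_max h1 h2.
Qed.

Lemma size_prod_linear (R : nzSemiRingType) (I : finType) (p : pred I)
    (q : I -> {poly R}) :
  (forall i, p i -> (size (q i) <= 2)%N) -> (size (\prod_(i | p i) q i)%R <= #|p|.+1)%N.
Proof.
move=> q_lin; rewrite -sum1_card.
apply: (big_ind2 (fun (r : {poly R}) k => size r <= k.+1)%N)
  => [|r1 k1 r2 k2 h1 h2|i /q_lin//].
  by rewrite size_poly1.
by apply: leq_trans (size_polyMleq _ _) _; move: h1 h2; lia.
Qed.

Lemma sum_indicator (R : nzSemiRingType) (I : finType) (p : pred I) (s : I) :
  \sum_(k | p k) ((k == s)%:R : R) = (p s)%:R.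
Proof.
case ps: (p s).
  by rewrite (bigD1 s) //= eqxx big1 ?addr0 // => k /andP[_ /negbTE->].
by rewrite big1 // => k pk; case: eqP => // ks; rewrite -ks pk in ps.
Qed.

Section Interpolation.
Variables (F : fieldType) (n : nat) (idx : 'I_n -> F) (S : {set 'I_n}).
Hypothesis idx_inj : {in S &, injective idx}.

Definition lagrange_basis (i : 'I_n) : {poly F} :=
  \prod_(k in S :\ i) ((idx i - idx k)^-1 *: ('X - (idx k)%:P)).

Lemma size_lagrange_basis i : i \in S -> (size (lagrange_basis i) <= #|S|)%N.
Proof.
move=> iS; rewrite (cardsD1 i S) iS add1n.
rewrite /lagrange_basis; apply: leq_trans (size_prod_linear _) _ => [k _|//].
by apply: leq_trans (size_scale_leq _ _) _; rewrite size_XsubC.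
Qed.

(* Its value at x, in the form used by [interp0]. *)
Lemma lagrange_basis_horner i x :
  (lagrange_basis i).[x] = \prod_(k in S | k != i) ((x - idx k) / (idx i - idx k)).
Proof.
rewrite /lagrange_basis horner_prod.
rewrite (eq_bigl (fun k => (k \in S) && (k != i))) => [|k]; last by rewrite !inE andbC.
by apply: eq_bigr => k _; rewrite hornerZ hornerXsubC mulrC.
Qed.

Lemma lagrange_basis_sample i l : i \in S -> l \in S ->
  (lagrange_basis i).[idx l] = (l == i)%:R.
Proof.
move=> iS lS; rewrite lagrange_basis_horner.
have [->|li] := eqVneq l i.
  apply: big1 => k /andP[kS ki]; rewrite divff // subr_eq0.
  by apply: contra ki => /eqP/idx_inj-> //.
by rewrite (bigD1 l) ?lS //= subrr mul0r mul0r.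
Qed.

(* A polynomial of degree < #|S| is determined by its values on S: the
   difference with its interpolant has #|S| distinct roots. *)
Lemma lagrange_interpolation (Q : {poly F}) : (size Q <= #|S|)%N ->
  Q = \sum_(i in S) Q.[idx i] *: lagrange_basis i.
Proof.
move=> sQ; apply/eqP; rewrite -subr_eq0; apply/eqP.
apply: (@roots_geq_poly_eq0 _ _ [seq idx i | i <- enum S]).
- apply/allP => y /mapP[l]; rewrite mem_enum => lS ->.
  rewrite /root hornerD hornerN horner_sum (bigD1 l) //= big1 => [|i /andP[iS il]].
    by rewrite hornerZ lagrange_basis_sample // eqxx mulr1 addr0 subrr.
  by rewrite hornerZ lagrange_basis_sample // eq_sym (negbTE il) mulr0.
- by rewrite map_inj_in_uniq ?enum_uniq // => x y; rewrite !mem_enum; apply: idx_inj.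
rewrite size_map -cardE; apply: leq_trans (size_polyD _ _) _.
rewrite size_polyN geq_max sQ.
apply: leq_trans (size_sum _ _ _) _; apply/bigmax_leqP => i iS.
by apply: leq_trans (size_scale_leq _ _) _; apply: size_lagrange_basis.
Qed.

Lemma interp0_samples (Q : {poly F}) (y : 'I_n -> F) :
  (size Q <= #|S|)%N -> {in S, forall i, y i = Q.[idx i]} -> interp0 idx S y = Q.[0].
Proof.
move=> sQ yQ; rewrite [in RHS](lagrange_interpolation sQ) horner_sum.
by apply: eq_bigr => i iS; rewrite hornerZ lagrange_basis_horner yQ.
Qed.

End Interpolation.

Section Invariant.
Variables (F : fieldType) (n m t len : nat) (Sigma : Type).
Variables (mu : 'I_m -> Sigma -> 'I_m) (idx : 'I_n -> F).
Variables (G : seed len -> {ffun 'I_m -> F} * seed len) (P : {set 'I_n} -> F -> {poly F}).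
Hypothesis P_size : forall T b, inFam t T -> (size (P T b) <= t.+1)%N.
Hypothesis P_root0 : forall T b, inFam t T -> (P T b).[0] = 0.
Hypothesis P_vanish : forall T b, inFam t T -> forall a, a \notin T -> (P T b).[idx a] = 0.

Local Notation config := (config F n m len).
Local Notation step := (step t mu idx G P).

Definition tick (s : 'I_m) (g : option Sigma) : 'I_m :=
  if g is Some gam then mu s gam else s.

Definition update_polys (Q : 'I_m -> {poly F}) (g : option Sigma) (j : 'I_m) : {poly F} :=
  if g is Some gam then \sum_(k | mu k gam == j) Q k else Q j.

Definition refresh_poly (gs : {set 'I_n} -> seed len) (j : 'I_m) : {poly F} :=
  \sum_(T | inFam t T) P T ((G (gs T)).1 j).

Definition next_polys (Q : 'I_m -> {poly F}) (g : option Sigma)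
    (gs : {set 'I_n} -> seed len) (j : 'I_m) : {poly F} :=
  update_polys Q g j + refresh_poly gs j.

Definition seeds_common (c : config) (gs : {set 'I_n} -> seed len) : Prop :=
  forall i T, inFam t T -> i \in T -> sd c i T = gs T.

Definition shared_by (c : config) (Q : 'I_m -> {poly F}) : Prop :=
  forall i j, lab c i j = (Q j).[idx i].

Definition sharing_of (s : 'I_m) (Q : 'I_m -> {poly F}) : Prop :=
  forall j, (size (Q j) <= t.+1)%N /\ (Q j).[0] = (j == s)%:R.

(* Seeds are advanced in lockstep, so they stay common. *)
Lemma step_seeds_common c g gs :
  seeds_common c gs -> seeds_common (step c g) (fun T => (G (gs T)).2).
Proof. by move=> common i T hT iT /=; rewrite hT iT common. Qed.

(* Each agent adds exactly the refresh terms of the sets containing it, which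
   is the full refresh polynomial since P^T_j vanishes outside T. *)
Lemma step_shared_by c g gs Q :
  seeds_common c gs -> shared_by c Q -> shared_by (step c g) (next_polys Q g gs).
Proof.
move=> common shared i j /=; rewrite hornerD; congr (_ + _).
  rewrite /update_labels /update_polys; case: g => [gam|]; last exact: shared.
  by rewrite horner_sum; apply: eq_bigr => k _; apply: shared.
rewrite /refresh_poly horner_sum [RHS](bigID (fun T : {set _} => i \in T)) /=.
rewrite [X in _ + X]big1 ?addr0.
  by apply: eq_bigr => T /andP[hT iT]; rewrite common.
by move=> T /andP[hT /P_vanish->].
Qed.

Lemma update_polys_sharing s g Q :
  sharing_of s Q -> sharing_of (tick s g) (update_polys Q g).
Proof.
move=> shQ j; case: g => [gam|] /=; last exact: shQ.
split; first by apply: size_sum_le => k _; case: (shQ k).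
rewrite horner_sum (eq_bigr (fun k => (k == s)%:R)) => [|k _]; last by case: (shQ k).
by rewrite sum_indicator eq_sym.
Qed.

Lemma refresh_poly_zero gs j :
  (size (refresh_poly gs j) <= t.+1)%N /\ (refresh_poly gs j).[0] = 0.
Proof.
split; first by apply: size_sum_le => T /P_size.
by rewrite horner_sum big1 // => T /P_root0.
Qed.

Lemma next_polys_sharing s g gs Q :
  sharing_of s Q -> sharing_of (tick s g) (next_polys Q g gs).
Proof.
move=> /(update_polys_sharing g) shU j; have [sU U0] := shU j.
have [sR R0] := refresh_poly_zero gs j.
split; first by apply: leq_trans (size_polyD _ _) _; rewrite geq_max sU.
by rewrite hornerD U0 R0 addr0.
Qed.

Lemma run_invariant (init : 'I_m) (f : 'I_m -> {poly F}) seed0 inp r :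
  sharing_of init f ->
  let c := run t mu idx G P (init_config idx f seed0) inp r in
  exists gs Q, [/\ seeds_common c gs, shared_by c Q & sharing_of (astate mu init inp r) Q].
Proof.
move=> shf; elim: r => [|r [gs [Q [common shared shQ]]]] /=; first by exists seed0, f.
exists (fun T => (G (gs T)).2), (next_polys Q (inp r.+1) gs); split.
- exact: step_seeds_common.
- exact: step_shared_by.
by case: (inp r.+1) (next_polys_sharing (inp r.+1) gs shQ).
Qed.

End Invariant.

Theorem proposition3
  (F : finFieldType) (n m t len : nat) (Sigma : finType)
  (mu : 'I_m -> Sigma -> 'I_m) (init : 'I_m)
  (idx : 'I_n -> F)
  (G : seed len -> {ffun 'I_m -> F} * seed len)
  (P : {set 'I_n} -> F -> {poly F})
  (f : 'I_m -> {poly F}) (seed0 : {set 'I_n} -> seed len)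
  (inp : nat -> option Sigma) :
  (1 <= t)%N -> (2 * t < n)%N -> (n < #|F|)%N ->
  injective idx -> (forall i, idx i != 0) ->
  (* Shamir sharing of the initial state *)
  (forall j, (size (f j) <= t.+1)%N /\ (f j).[0] = (j == init)%:R) ->
  (* P T b is the polynomial P^T_j (with b = b^T_j) of the protocol *)
  (forall (T : {set 'I_n}) (b : F), @inFam n t T ->
     [/\ (size (P T b) <= t.+1)%N,
         (P T b).[0] = 0,
         (forall a, a \notin T -> (P T b).[idx a] = 0) &
         (forall k, k \in T -> (forall a, a \in T -> (k <= a)%N) ->
            (P T b).[idx k] = b)]) ->
  forall r : nat,
    let c := @run F n m t len Sigma mu idx G P (init_config idx f seed0) inp r in
    (forall j : 'I_m, exists Q : {poly F},
       [/\ (size Q <= t.+1)%N,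
           (forall i : 'I_n, lab c i j = Q.[idx i]) &
           Q.[0] = (j == astate mu init inp r)%:R])
    /\
    (forall S : {set 'I_n}, #|S| = t.+1 ->
       forall j : 'I_m, interp0 idx S (fun i => lab c i j) = (j == astate mu init inp r)%:R).
Proof.
move=> _ _ _ idx_inj _ f_sharing P_spec r c.
have P_size T b : inFam t T -> (size (P T b) <= t.+1)%N by case/(P_spec T b).
have P_root0 T b : inFam t T -> (P T b).[0] = 0 by case/(P_spec T b).
have P_vanish T b : inFam t T -> forall a, a \notin T -> (P T b).[idx a] = 0.
  by case/(P_spec T b).
have [_ [Q [_ shared Q_sharing]]] :=
  run_invariant mu G P_size P_root0 P_vanish seed0 inp r f_sharing.
split=> [j | S cardS j]; have [Q_size Q0] := Q_sharing j; first by exists (Q j).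
rewrite -Q0; apply: interp0_samples => [|| i _]; first exact: in2W.
  by rewrite cardS.
exact: shared.
Qed.
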